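(* Let $H$ be an undirected graph (possibly with loops), let $T$ be a tree with at least $2$ vertices and an arbitrarily chosen root $r$, and let $\alpha,\beta$ be two $H$-colorings of $T$. Then $\alpha$ can be reconfigured to $\beta$ if and only if there is a walk of even length in $H$ between $\alpha(r)$ and $\beta(r)$.
   Context: Undirected graphs are treated as digraphs with arcs in both directions for every edge. An $H$-coloring of $T$ is a map $c:V(T)\to V(H)$ such that for every edge $uv$ of $T$, $c(u)c(v)$ is an edge of $H$ (possibly a loop if $c(u)=c(v)$). $\alpha$ can be reconfigured to $\beta$ if there is a sequence of $H$-colorings of $T$ from $\alpha$ to $\beta$ in which consecutive colorings differ on exactly one vertex. A walk of length $0$ (when $\alpha(r)=\beta(r)$) counts as even. *)

From mathcomp Require Import all_boot.
Set Implicit Arguments. Unset Strict Implicit. Unset Printing Implicit Defensive.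

Definition simple_graph (T : finType) (e : rel T) : Prop :=
  symmetric e /\ irreflexive e.

(* A tree: a connected simple graph with no cycle.  A cycle is a closed walk
   x = x_0, x_1, ..., x_k, x_0 with k+1 >= 3 pairwise distinct vertices. *)
Definition acyclic (T : finType) (e : rel T) : Prop :=
  forall (x : T) (p : seq T),
    uniq (x :: p) -> path e x p -> 2 <= size p -> ~~ e (last x p) x.

Definition is_tree (T : finType) (e : rel T) : Prop :=
  simple_graph e /\ (forall x y, connect e x y) /\ acyclic e.

Definition undirected (H : finType) (eH : rel H) : Prop := symmetric eH.

Definition is_Hcoloring (T H : finType) (eT : rel T) (eH : rel H)
  (c : {ffun T -> H}) : bool :=
  [forall u, forall v, eT u v ==> eH (c u) (c v)].

Definition differ_one (T H : finType) (c c' : {ffun T -> H}) : bool :=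
  #|[set v | c v != c' v]| == 1.

Definition reconfigurable (T H : finType) (eT : rel T) (eH : rel H)
  (alpha beta : {ffun T -> H}) : Prop :=
  exists s : seq {ffun T -> H},
    [/\ all (is_Hcoloring eT eH) (alpha :: s),
        path (@differ_one T H) alpha s & last alpha s = beta].

(* a walk of even length in H from a to b (length = number of steps;
   length 0 allowed when a = b) *)
Definition even_walk (H : finType) (eH : rel H) (a b : H) : Prop :=
  exists p : seq H, [/\ path eH a p, last a p = b & ~~ odd (size p)].

From mathcomp Require Import all_boot zify.
Set Implicit Arguments. Unset Strict Implicit. Unset Printing Implicit Defensive.

(* If a move recolors the root r, it keeps the color of a neighbour u of r,
   so the color of r travels along walks of length two: the parity condition
   is necessary.  Conversely, every edge of the tree joins a vertex to its
   parent, one level closer to r.  Recoloring each vertex by the color of an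
   ancestor at a prescribed depth gives H-colorings, and two such choices of
   depths that differ by one on consecutive levels can be interpolated one
   vertex at a time.  Folding the deepest levels step by step onto the edge
   r u turns alpha into the coloring equal to alpha(r) on even levels and to
   alpha(u) on odd levels; such alternating colorings follow any even walk of
   H two steps at a time, and the same folding, reversed, reaches beta. *)


Section Reconfiguration.
Variables (T H : finType) (eT : rel T) (eH : rel H).

Local Notation coloring := {ffun T -> H}.
Local Notation hcol := (is_Hcoloring eT eH).
Local Notation reconf := (reconfigurable eT eH).

Lemma is_HcoloringP (c : coloring) :
  reflect (forall u v, eT u v -> eH (c u) (c v)) (hcol c).
Proof.
apply: (iffP forallP) => [h u v | h u].
  exact/implyP/(forallP (h u)).
by apply/forallP => v; apply/implyP/h.
Qed.

Lemma differ_one_sym : symmetric (@differ_one T H).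
Proof.
move=> c c'; rewrite /differ_one.
suff -> : [set v | c v != c' v] = [set v | c' v != c v] by [].
by apply/setP => v; rewrite !inE eq_sym.
Qed.

Lemma reconfigurable_refl c : hcol c -> reconf c c.
Proof. by move=> hc; exists [::]; rewrite /= hc. Qed.

Lemma reconfigurable_trans a b c : reconf a b -> reconf b c -> reconf a c.
Proof.
move=> [s1 [h1 p1 l1]] [s2 [h2 p2 l2]]; exists (s1 ++ s2); split.
- by rewrite -cat_cons all_cat h1; case/andP: h2.
- by rewrite cat_path p1 l1 p2.
- by rewrite last_cat l1 l2.
Qed.

Lemma reconfigurable_sym a b : reconf a b -> reconf b a.
Proof.
move=> [s [hs ps <-]]; exists (rev (belast a s)); split.
- by rewrite -rev_rcons -lastI all_rev.
- rewrite rev_path; apply: sub_path ps => c c'; by rewrite differ_one_sym.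
- by case: s {hs ps} => //= c s; rewrite rev_cons last_rcons.
Qed.

Definition mixable (c1 c2 : coloring) :=
  forall d : coloring, (forall v, d v = c1 v \/ d v = c2 v) -> hcol d.

Lemma mixable_reconfigurable c1 c2 : mixable c1 c2 -> reconf c1 c2.
Proof.
move Ediff: #|[set v | c1 v != c2 v]| => n.
elim: n c1 Ediff => [|n IH] c1 Ediff mix.
  have -> : c1 = c2.
    apply/ffunP => v; apply/eqP; apply: contraT => hv.
    by move/setP/(_ v): (cards0_eq Ediff); rewrite !inE hv.
  by apply: reconfigurable_refl; apply: mix => v; right.
have /card_gt0P [v] : 0 < #|[set v | c1 v != c2 v]| by rewrite Ediff.
rewrite inE => hv.
pose c := [ffun w => if w == v then c2 v else c1 w].
have diff_c1 : [set w | c1 w != c w] = [set v].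
  by apply/setP => w; rewrite !inE ffunE; case: (eqVneq w v) => [->|]; rewrite ?eqxx.
have diff_c2 : [set w | c w != c2 w] = [set w | c1 w != c2 w] :\ v.
  by apply/setP => w; rewrite !inE ffunE; case: (eqVneq w v) => [->|]; rewrite ?eqxx.
have mix_c : mixable c c2.
  move=> d hd; apply: mix => w; case: (hd w) => ->; last by right.
  by rewrite ffunE; case: eqP => [->|_]; [right|left].
have [|s [hs ps ls]] := IH c _ mix_c.
  by move: Ediff; rewrite diff_c2 (cardsD1 v) inE hv add1n => -[].
exists (c :: s); split => //=.
- by apply/andP; split; [apply: mix => w; left | exact: hs].
- by rewrite ps /differ_one diff_c1 cards1.
Qed.

Hypothesis eH_sym : symmetric eH.

Lemma even_walk_trans x y z : even_walk eH x y -> even_walk eH y z -> even_walk eH x z.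
Proof.
move=> [p [pp lp op]] [q [pq lq oq]]; exists (p ++ q); split.
- by rewrite cat_path pp lp pq.
- by rewrite last_cat lp lq.
- by rewrite size_cat oddD (negbTE op) (negbTE oq).
Qed.

Variables (r u : T).
Hypotheses (eT_ru : eT r u) (u_neq_r : u != r).

Lemma differ_one_even_walk c c' : hcol c -> hcol c' -> differ_one c c' ->
  even_walk eH (c r) (c' r).
Proof.
move=> /is_HcoloringP hc /is_HcoloringP hc' /cards1P [z Ez].
have changed w : c w != c' w -> w = z by move=> hw; apply/set1P; rewrite -Ez inE.
have [<-|neq] := eqVneq (c r) (c' r); first by exists [::].
have cu : c u = c' u.
  apply/eqP; apply: contraT => /changed uz.
  by move: u_neq_r; rewrite uz (changed _ neq) eqxx.
exists [:: c u; c' r]; split => //=.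
by rewrite hc //= cu eH_sym hc'.
Qed.

Lemma reconfigurable_even_walk a b : hcol a -> reconf a b -> even_walk eH (a r) (b r).
Proof.
move=> ha [s [hs ps <-]]; elim: s a ha hs ps => [|c s IH] a ha /= hs ps.
  by exists [::].
case/and3P: hs => _ hc hs; case/andP: ps => ac ps.
apply: even_walk_trans (differ_one_even_walk ha hc ac) (IH c hc _ ps).
by rewrite /= hc.
Qed.

End Reconfiguration.

Section RootedTree.
Variables (T : finType) (e : rel T) (r : T).
Hypotheses (e_sym : symmetric e) (e_irr : irreflexive e).
Hypotheses (e_conn : forall x y, connect e x y) (e_acyc : acyclic e).

Definition reachable_in (v : T) (n : nat) : bool :=
  [exists t : n.-tuple T, path e r t && (last r t == v)].

Lemma reachable_in_ex v : exists n, reachable_in v n.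
Proof.
have /connectP [p pp ->] := e_conn r v.
by exists (size p); apply/existsP; exists (in_tuple p); rewrite /= pp eqxx.
Qed.

Definition depth v := ex_minn (reachable_in_ex v).

Lemma depth_min v p : path e r p -> last r p = v -> depth v <= size p.
Proof.
move=> pp lp; rewrite /depth; case: ex_minnP => m _; apply.
by apply/existsP; exists (in_tuple p); rewrite /= pp lp eqxx.
Qed.

Lemma shortest_path v : exists2 p, path e r p & last r p = v /\ size p = depth v.
Proof.
rewrite /depth; case: ex_minnP => m /existsP [t /andP [pt /eqP lt]] _.
by exists t; rewrite ?size_tuple.
Qed.

Lemma depth_eq0 v : (depth v == 0) = (v == r).
Proof.
apply/eqP/eqP => [|->]; last by apply/eqP; rewrite -leqn0 (@depth_min r [::]).
by case: (shortest_path v) => -[|??] _ [<-] // <-.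
Qed.

Lemma depth_edge u v : e u v -> depth v <= (depth u).+1.
Proof.
move=> euv; case: (shortest_path u) => p pp [lp <-].
by rewrite -(size_rcons p v) depth_min ?last_rcons // rcons_path pp lp.
Qed.

Definition parent v := odflt v [pick w | e v w && ((depth w).+1 == depth v)].

Lemma parentP v : v != r -> e v (parent v) /\ (depth (parent v)).+1 = depth v.
Proof.
move=> vr; rewrite /parent; case: pickP => [w /andP [ew /eqP dw] | none] //=.
case: (shortest_path v) => p; case/lastP: p => [|q w] pq [lp sp].
  by move: vr; rewrite -lp eqxx.
move: pq lp sp; rewrite rcons_path last_rcons size_rcons => /andP [pq eqv] wv dv; subst w.
have := none (last r q); rewrite e_sym eqv -dv eqSS eqn_leq depth_min //=.
by rewrite -ltnS dv depth_edge.
Qed.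

Lemma root_neighbour : 1 < #|T| -> exists u, e r u.
Proof.
case/card_gt1P => x [y [_ _ xy]].
have [t tr] : exists t, t != r.
  by case: (eqVneq x r) => [xr|]; [exists y; rewrite -xr eq_sym | exists x].
have /connectP [[|u p] /= pp tp] := e_conn r t; first by rewrite tp eqxx in tr.
by exists u; case/andP: pp.
Qed.

(* Going up from [u] and [u'] to a common ancestor yields a simple path. *)
Lemma same_depth_path k u u' : depth u = k -> depth u' = k -> u != u' ->
  exists q, [/\ path e u (rcons q u'), uniq (u :: rcons q u'), 0 < size q
              & all (fun w => depth w < k) q].
Proof.
elim: k u u' => [|k IH] u u' du du' uu'.
  by move: uu'; move/eqP: du; move/eqP: du'; rewrite !depth_eq0 => /eqP-> /eqP->; rewrite eqxx.
have [ur u'r] : u != r /\ u' != r by rewrite -!depth_eq0 du du'.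
case: (parentP ur) (parentP u'r) => eu + [eu'].
rewrite du du' => -[pu] [pu'].
have low w : depth w < k.+1 -> w != u /\ w != u'.
  by move=> lt; split; apply: contraTneq lt => ->; rewrite ?du ?du' ltnn.
have [E|N] := eqVneq (parent u) (parent u').
  have [pu_u pu_u'] := low _ (eq_leq pu).
  exists [:: parent u]; split => //=.
  - by rewrite eu E e_sym eu'.
  - by rewrite !inE negb_or uu' eq_sym pu_u pu_u'.
  - by rewrite pu ltnSn.
case: (IH _ _ pu pu' N) => q [pq uq sq aq].
have aX : all (fun w => depth w < k.+1) (parent u :: rcons q (parent u')).
  by rewrite /= all_rcons pu pu' ltnSn; apply: sub_all aq => w /ltnW.
exists (parent u :: rcons q (parent u')); split => //.
- by rewrite rcons_cons /= eu rcons_path pq last_rcons e_sym eu'.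
- rewrite cons_uniq rcons_uniq mem_rcons in_cons negb_or uu' uq andbT /=.
  by apply/andP; split; apply/negP => /(allP aX); rewrite /= ?du ?du' ltnn.
Qed.

Lemma edge_depth_neq u v : e u v -> depth u != depth v.
Proof.
move=> euv; apply/eqP => duv.
have uv : u != v by apply: contraTneq euv => ->; rewrite e_irr.
case: (same_depth_path erefl (esym duv) uv) => q [pq uq sq _].
have := e_acyc uq pq; rewrite size_rcons ltnS sq last_rcons e_sym euv.
by move/(_ isT).
Qed.

Lemma parent_unique v u u' : e v u -> e v u' ->
  (depth u).+1 = depth v -> (depth u').+1 = depth v -> u = u'.
Proof.
move=> evu evu' du du'; apply/eqP; apply: contraT => uu'.
have duu : depth u' = depth u by apply/succn_inj; rewrite du du'.
case: (same_depth_path erefl duu uu') => q [pq uq sq aq].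
have below : all (fun w => depth w < depth v) (u :: rcons q u').
  by rewrite /= all_rcons -du duu ltnSn; apply: sub_all aq => w /ltnW.
have v_notin : v \notin u :: rcons q u' by apply/negP => /(allP below); rewrite ltnn.
have := @e_acyc v (u :: rcons q u').
rewrite cons_uniq v_notin uq /= evu pq size_rcons last_rcons e_sym evu'.
by move/(_ isT isT isT).
Qed.

Lemma parent_of_edge u v : e u v -> (depth u).+1 = depth v ->
  v != r /\ parent v = u.
Proof.
move=> euv duv; have vr : v != r by rewrite -depth_eq0 -duv.
have [evp dp] := parentP vr; split => //.
by apply: parent_unique evp _ dp duv; rewrite e_sym.
Qed.

Lemma edge_parent u v : e u v ->
  (v != r /\ parent v = u) \/ (u != r /\ parent u = v).
Proof.
move=> euv; have evu : e v u by rewrite e_sym.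
have := edge_depth_neq euv; have := depth_edge euv; have := depth_edge evu.
case: (ltngtP (depth u) (depth v)) => [lt|gt|->]; rewrite ?eqxx // => du dv _.
- by left; apply: parent_of_edge euv _; apply/eqP; rewrite eqn_leq lt dv.
- by right; apply: parent_of_edge evu _; apply/eqP; rewrite eqn_leq gt du.
Qed.

Definition ancestor k v := iter (depth v - k) parent v.

Lemma depth_iter_parent n v : n <= depth v -> depth (iter n parent v) = depth v - n.
Proof.
elim: n => [|n IH] h /=; first by rewrite subn0.
have IH' := IH (ltnW h).
have vr : iter n parent v != r by rewrite -depth_eq0 IH'; lia.
have [_ dp] := parentP vr; lia.
Qed.

Lemma depth_ancestor k v : k <= depth v -> depth (ancestor k v) = k.
Proof. by move=> h; rewrite depth_iter_parent ?leq_subr //; lia. Qed.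

Lemma ancestor_depth v : ancestor (depth v) v = v.
Proof. by rewrite /ancestor subnn. Qed.

Lemma ancestor0 v : ancestor 0 v = r.
Proof. by apply/eqP; rewrite -depth_eq0 depth_ancestor. Qed.

Lemma ancestor_edge i v : i < depth v -> e (ancestor i.+1 v) (ancestor i v).
Proof.
move=> h; have -> : ancestor i v = parent (ancestor i.+1 v).
  by rewrite /ancestor (_ : depth v - i = (depth v - i.+1).+1) //; lia.
by apply: (parentP _).1; rewrite -depth_eq0 depth_ancestor.
Qed.

Lemma ancestor_parent i v : v != r -> i <= depth (parent v) ->
  ancestor i (parent v) = ancestor i v.
Proof.
move=> vr h; have [_ dp] := parentP vr.
by rewrite /ancestor (_ : depth v - i = (depth (parent v) - i).+1) ?iterSr //; lia.
Qed.

Variables (H : finType) (eH : rel H).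
Hypothesis eH_sym : symmetric eH.

Local Notation coloring := {ffun T -> H}.
Local Notation hcol := (is_Hcoloring e eH).
Local Notation reconf := (reconfigurable e eH).

Lemma is_Hcoloring_of_parent (d : coloring) :
  (forall v, v != r -> eH (d (parent v)) (d v)) -> hcol d.
Proof.
move=> h; apply/is_HcoloringP => u v.
by case/edge_parent => -[vr <-]; [|rewrite eH_sym]; exact: h.
Qed.

Lemma is_Hcoloring_of_parity (A B : pred H) (d : coloring) :
  (forall x y, A x -> B y -> eH x y) ->
  (forall v, (if odd (depth v) then B else A) (d v)) -> hcol d.
Proof.
move=> AB hd; apply: is_Hcoloring_of_parent => v /parentP [_ dp].
move: (hd v) (hd (parent v)); rewrite -dp /=.
by case: odd => /= hv hp; [rewrite eH_sym|]; exact: AB.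
Qed.

Lemma mixable_of_parity (A B : pred H) (c1 c2 : coloring) :
  (forall x y, A x -> B y -> eH x y) ->
  (forall v, let P := if odd (depth v) then B else A in P (c1 v) && P (c2 v)) ->
  mixable e eH c1 c2.
Proof.
move=> AB hc d hd; apply: (is_Hcoloring_of_parity AB) => v.
by case/andP: (hc v); case: (hd v) => ->.
Qed.

Definition ancestor_coloring (a : coloring) (g : nat -> nat) : coloring :=
  [ffun v => a (ancestor (g (depth v)) v)].

(* The condition on [g1], [g2] makes every mixture color a vertex and its
   parent by [a] at two ancestors of consecutive depths. *)
Lemma mixable_ancestor_coloring a g1 g2 : hcol a ->
  (forall d, g1 d <= d) -> (forall d, g2 d <= d) ->
  (forall m i j, (i == g1 m) || (i == g2 m) -> (j == g1 m.+1) || (j == g2 m.+1) ->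
     (i.+1 == j) || (j.+1 == i)) ->
  mixable e eH (ancestor_coloring a g1) (ancestor_coloring a g2).
Proof.
move=> /is_HcoloringP ha g1_le g2_le g_step d hd.
apply: is_Hcoloring_of_parent => v vr; have [_ dp] := parentP vr.
have level w : exists i, [/\ (i == g1 (depth w)) || (i == g2 (depth w)),
                            i <= depth w & d w = a (ancestor i w)].
  by case: (hd w) => ->; rewrite ffunE; [exists (g1 (depth w)) | exists (g2 (depth w))];
     rewrite ?eqxx ?orbT.
have [i [gi i_le ->]] := level (parent v); have [j [gj j_le ->]] := level v.
rewrite ancestor_parent //; move: gj; rewrite -dp => /(g_step _ _ _ gi).
by case/orP => /eqP ?; subst; [rewrite eH_sym|]; apply/ha/ancestor_edge;
  rewrite -dp ltnS // ltnW.
Qed.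

(* Depths below [k] are kept; deeper levels are folded onto the two
   levels [k.-1] and [k], alternately, so that parity is preserved. *)
Definition fold_level (k d : nat) : nat :=
  if d < k then d else if odd (d + k) then k.-1 else k.

Lemma fold_level_le k d : fold_level k d <= d.
Proof. by rewrite /fold_level; case: ifP => // h; case: ifP => _; lia. Qed.

Lemma fold_level_step k m i j : 0 < k ->
  (i == fold_level k.+1 m) || (i == fold_level k m) ->
  (j == fold_level k.+1 m.+1) || (j == fold_level k m.+1) ->
  (i.+1 == j) || (j.+1 == i).
Proof.
rewrite /fold_level !addSn !addnS /=.
by have := odd_double_half (m + k); case: odd => /= h; repeat case: ifPn => ?; lia.
Qed.

Definition tree_fold (a : coloring) (k : nat) : coloring :=
  ancestor_coloring a (fold_level k).

Lemma tree_fold_id a k : (forall v, depth v < k) -> tree_fold a k = a.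
Proof. by move=> h; apply/ffunP => v; rewrite ffunE /fold_level h ancestor_depth. Qed.

Lemma mixable_tree_fold a k : hcol a -> 0 < k ->
  mixable e eH (tree_fold a k.+1) (tree_fold a k).
Proof.
move=> ha k_gt0; apply: mixable_ancestor_coloring => //; try exact: fold_level_le.
by move=> m i j; apply: fold_level_step.
Qed.

Lemma reconfigurable_tree_fold a k : hcol a -> 0 < k ->
  reconf (tree_fold a k) (tree_fold a 1).
Proof.
move=> ha; elim: k => // -[_ _ | k IH _].
  by apply: reconfigurable_refl; apply: (mixable_tree_fold ha (ltn0Sn 0)) => v; right.
apply: reconfigurable_trans (IH isT).
exact/mixable_reconfigurable/mixable_tree_fold.
Qed.

Lemma reconfigurable_to_tree_fold a : hcol a -> reconf a (tree_fold a 1).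
Proof.
move=> ha; have depth_lt v : depth v < (\max_w depth w).+1 by rewrite ltnS leq_bigmax.
by rewrite -{1}(tree_fold_id a depth_lt); apply: reconfigurable_tree_fold.
Qed.

Definition alternating (x y : H) : coloring :=
  [ffun v => if odd (depth v) then y else x].

Lemma mixable_tree_fold_alternating a u : hcol a -> e r u ->
  mixable e eH (tree_fold a 1) (alternating (a r) (a u)).
Proof.
move=> /is_HcoloringP ha ru.
apply: (@mixable_of_parity (pred1 (a r)) (eH (a r))) => [_ y /eqP -> //| v].
rewrite /= !ffunE /fold_level addn1; case: (posnP (depth v)) => [-> | d_gt0].
  by rewrite /= ancestor0 !eqxx.
rewrite ltnNge d_gt0 /=; case: odd; rewrite /= ?ancestor0 ?eqxx // (ha _ _ ru) andbT.
by rewrite eH_sym -(ancestor0 v); apply/ha/ancestor_edge.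
Qed.

Lemma mixable_alternating_r x y y' : eH x y -> eH x y' ->
  mixable e eH (alternating x y) (alternating x y').
Proof.
move=> xy xy'; apply: (@mixable_of_parity (pred1 x) (eH x)) => [_ ? /eqP -> //|v].
by rewrite !ffunE; case: odd => /=; rewrite ?xy ?xy' ?eqxx.
Qed.

Lemma mixable_alternating_l x x' y : eH x y -> eH x' y ->
  mixable e eH (alternating x y) (alternating x' y).
Proof.
move=> xy x'y; apply: (@mixable_of_parity (eH^~ y) (pred1 y)) => [? _ ? /eqP -> //|v].
by rewrite !ffunE; case: odd => /=; rewrite ?xy ?x'y ?eqxx.
Qed.

(* Each two steps x -- x1 -- x2 of the walk are realised by moving the odd
   levels to x1 and then the even levels to x2. *)
Lemma reconfigurable_alternating x y z y' : eH x y -> eH z y' ->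
  even_walk eH x z -> reconf (alternating x y) (alternating z y').
Proof.
move=> xy zy' [p [px pz even_p]]; subst z.
have [n] := ubnP (size p); elim: n => // n IH in x y p xy zy' px even_p *.
case: p zy' px even_p => [|x1 [|x2 p]] //= zy'.
  by move=> _ _ _; exact: mixable_reconfigurable (mixable_alternating_r xy zy').
rewrite negbK ltnS => /and3P [xx1 x1x2 px] even_p size_p.
apply: reconfigurable_trans (mixable_reconfigurable (mixable_alternating_r xy xx1)) _.
have x2x1 : eH x2 x1 by rewrite eH_sym.
apply: reconfigurable_trans (mixable_reconfigurable (mixable_alternating_l xx1 x2x1)) _.
by apply: IH => //; apply: ltnW.
Qed.

Lemma reconfigurable_of_even_walk u a b : e r u -> hcol a -> hcol b ->
  even_walk eH (a r) (b r) -> reconf a b.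
Proof.
move=> ru /[dup] ha /is_HcoloringP ha' /[dup] hb /is_HcoloringP hb' walk.
apply: reconfigurable_trans (reconfigurable_to_tree_fold ha) _.
apply: reconfigurable_trans (mixable_reconfigurable (mixable_tree_fold_alternating ha ru)) _.
apply: reconfigurable_trans (reconfigurable_alternating (ha' _ _ ru) (hb' _ _ ru) walk) _.
apply: reconfigurable_sym; apply: reconfigurable_trans (reconfigurable_to_tree_fold hb) _.
exact/mixable_reconfigurable/mixable_tree_fold_alternating.
Qed.

End RootedTree.

Theorem proposition5 (H T : finType) (eH : rel H) (eT : rel T) (r : T)
    (alpha beta : {ffun T -> H}) :
  undirected eH -> is_tree eT -> 2 <= #|T| ->
  is_Hcoloring eT eH alpha -> is_Hcoloring eT eH beta ->
  reconfigurable eT eH alpha beta <-> even_walk eH (alpha r) (beta r).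
Proof.
move=> eH_sym [[eT_sym eT_irr] [eT_conn eT_acyc]] card_T ha hb.
have [u ru] := root_neighbour r eT_conn card_T.
have ur : u != r by apply: contraTneq ru => ->; rewrite eT_irr.
split; first exact: (reconfigurable_even_walk eH_sym ru ur ha).
exact: (reconfigurable_of_even_walk eT_sym eT_irr eT_conn eT_acyc eH_sym ru ha hb).
Qed.
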